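(* Let $R$ be a commutative ring, $S\subseteq R$ a subset, and $\eta:R\to S^{(-1)}R$ the canonical map. Then: (i) $\eta$ is an epimorphism in the category of commutative rings; (ii) the induced map $\eta^*:\mathrm{Spec}(S^{(-1)}R)\to\mathrm{Spec}(R)$, $\mathfrak q\mapsto\eta^{-1}(\mathfrak q)$, is bijective; (iii) for each $s\in S$, the set $(\eta^* )^{-1}(V(s))$ is both open and closed in $\mathrm{Spec}(S^{(-1)}R)$ with respect to the Zariski topology, and also with respect to the flat topology; (iv) $S^{(-1)}R$ is a nonzero ring if and only if $R$ is; (v) $\ker(\eta)$ is contained in the nilradical of $R$.
   Context: For $a,b$ in a commutative ring, $b$ is a pointwise inverse of $a$ if $a=a^2b$ and $b=b^2a$. For a subset $S\subseteq R$, $S^{(-1)}R=R[x_s:s\in S]/I$ where $I$ is generated by $sx_s^2-x_s$ and $s^2x_s-s$ ($s\in S$), and $\eta:R\to S^{(-1)}R$ is the canonical map. For a ring $A$ and $f\in A$, $V(f)=\{\mathfrak p\in\mathrm{Spec}(A): f\in\mathfrak p\}$, and for an ideal $I$, $V(I)=\{\mathfrak p: I\subseteq \mathfrak p\}$. The flat topology on $\mathrm{Spec}(A)$ is the topology having as a basis of open sets the sets $V(I)$ with $I$ ranging over finitely generated ideals of $A$ (this is Hochster's inverse topology). *)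

From HB Require Import structures.
From mathcomp Require Import all_boot all_order all_algebra.
Set Implicit Arguments. Unset Strict Implicit. Unset Printing Implicit Defensive.
Import Order.TTheory GRing.Theory Num.Theory.
Local Open Scope ring_scope.

Definition is_ideal (A : comPzRingType) (I : A -> Prop) : Prop :=
  [/\ I 0, (forall x y, I x -> I y -> I (x + y)) & (forall a x, I x -> I (a * x))].

Definition is_prime_ideal (A : comPzRingType) (P : A -> Prop) : Prop :=
  [/\ is_ideal P, ~ P 1 & (forall x y, P (x * y) -> P x \/ P y)].

Definition Spec (A : comPzRingType) : Type := {P : A -> Prop | is_prime_ideal P}.

Definition fg_ideal (A : comPzRingType) (l : seq A) : A -> Prop :=
  fun a => exists c : seq A, size c = size l /\
             a = \sum_(i < size l) c`_i * l`_i.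

Definition finitely_generated (A : comPzRingType) (I : A -> Prop) : Prop :=
  exists l : seq A, forall a, I a <-> fg_ideal l a.

Definition V (A : comPzRingType) (I : A -> Prop) : Spec A -> Prop :=
  fun p => forall a, I a -> sval p a.

Definition Vf (A : comPzRingType) (f : A) : Spec A -> Prop :=
  fun p => sval p f.

Definition zariski_closed (A : comPzRingType) (U : Spec A -> Prop) : Prop :=
  exists I : A -> Prop, is_ideal I /\ forall p, U p <-> V I p.

Definition zariski_open (A : comPzRingType) (U : Spec A -> Prop) : Prop :=
  zariski_closed (fun p => ~ U p).

(* Flat (inverse) topology: generated by the basis V(I), I finitely generated
   ideal; open sets are the unions of basic open sets. *)
Definition flat_open (A : comPzRingType) (U : Spec A -> Prop) : Prop :=
  forall p, U p -> exists I : A -> Prop,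
    [/\ is_ideal I, finitely_generated I, V I p & forall q, V I q -> U q].

Definition flat_closed (A : comPzRingType) (U : Spec A -> Prop) : Prop :=
  flat_open (fun p => ~ U p).

Lemma comap_prime (R A : comPzRingType) (f : {rmorphism R -> A})
  (P : A -> Prop) : is_prime_ideal P -> is_prime_ideal (fun r => P (f r)).
Proof.
case=> [[P0 PD PM] P1 Pp]; split; first split.
- by rewrite rmorph0.
- by move=> x y Hx Hy; rewrite rmorphD; apply: PD.
- by move=> a x Hx; rewrite rmorphM; apply: PM.
- by rewrite rmorph1.
- by move=> x y; rewrite rmorphM; apply: Pp.
Qed.

Definition comap (R A : comPzRingType) (f : {rmorphism R -> A})
  (q : Spec A) : Spec R :=
  exist _ (fun r => sval q (f r)) (comap_prime f (proj2_sig q)).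

(* (A, eta, x) is (a presentation of) S^(-1)R = R[x_s : s in S]/I, where I is
   generated by s x_s^2 - x_s and s^2 x_s - s: i.e. it satisfies the universal
   property of this quotient of the polynomial ring.  The variable x_s is the
   value x s (values of x outside S are irrelevant). *)
Definition is_pinv_localization (R : comPzRingType) (S : R -> Prop)
  (A : comPzRingType) (eta : {rmorphism R -> A}) (x : R -> A) : Prop :=
  (forall s, S s -> eta s * x s ^+ 2 - x s = 0 /\ eta s ^+ 2 * x s - eta s = 0) /\
  (forall (B : comPzRingType) (f : {rmorphism R -> B}) (y : R -> B),
     (forall s, S s -> f s * y s ^+ 2 - y s = 0 /\ f s ^+ 2 * y s - f s = 0) ->
     exists g : {rmorphism A -> B},
       ((forall r, g (eta r) = f r) /\ (forall s, S s -> g (x s) = y s)) /\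
       (forall g' : {rmorphism A -> B},
          (forall r, g' (eta r) = f r) -> (forall s, S s -> g' (x s) = y s) ->
          forall a, g' a = g a)).

(* For a prime p of R, every element of the residue field k(p) has a pointwise
   inverse (its field inverse, or 0), so the universal property of S^(-1)R maps
   it to k(p) over R; the kernel of that map is a prime lying over p.  If q is
   any prime over p, then k(p) embeds into k(q) over R, and since two maps out of
   S^(-1)R agreeing on R are equal (pointwise inverses are unique), q is that
   kernel: the fibres of eta^* are singletons.  For s in S, e = eta(s) x_s is an
   idempotent with V(eta s) = D(1 - e), whence (iii).  Parts (iv) and (v) follow
   from surjectivity of eta^* and the existence of a prime avoiding the powers of
   a non-nilpotent element. *)
From HB Require Import structures.
From mathcomp Require Import all_boot all_order all_algebra.
From mathcomp Require Import boolp classical_sets.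
From mathcomp Require Import ring.
Import Order.TTheory GRing.Theory Num.Theory.
Set Implicit Arguments.
Unset Strict Implicit.
Unset Printing Implicit Defensive.
Local Open Scope ring_scope.
Local Open Scope quotient_scope.

Definition pointwise_inv (T : comPzRingType) (a b : T) : Prop :=
  a * b ^+ 2 - b = 0 /\ a ^+ 2 * b - a = 0.

Section PointwiseInverse.
Variable T : comPzRingType.
Implicit Types a b c : T.

Lemma pointwise_inv_uniq a b c : pointwise_inv a b -> pointwise_inv a c -> b = c.
Proof.
move=> [/subr0_eq Eb /subr0_eq Eab] [/subr0_eq Ec /subr0_eq Eac].
have e : a * b = a * c by rewrite -[in LHS]Eac -[in RHS]Eab; ring.
by rewrite -[LHS]Eb expr2 mulrA e mulrAC e -mulrA -expr2 Ec.
Qed.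

Lemma rmorph_pointwise_inv (U : comPzRingType) (f : {rmorphism T -> U}) a b :
  pointwise_inv a b -> pointwise_inv (f a) (f b).
Proof.
by case=> e1 e2; rewrite /pointwise_inv -!rmorphXn -!rmorphM -!rmorphB e1 e2 rmorph0.
Qed.

Lemma pointwise_inv_idempotent a b : pointwise_inv a b ->
  (a * b) * (1 - a * b) = 0 /\ a * (a * b) = a.
Proof.
case=> _ /subr0_eq e; split; last by rewrite mulrA -expr2.
rewrite mulrBr mulr1.
have -> : a * b * (a * b) = (a ^+ 2 * b) * b by ring.
by rewrite e subrr.
Qed.
End PointwiseInverse.

Lemma pointwise_invV (F : fieldType) (a : F) : pointwise_inv a a^-1.
Proof.
have [->|a0] := eqVneq a 0; first by rewrite invr0 /pointwise_inv; split; ring.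
rewrite /pointwise_inv expr2 mulrA divff // mul1r subrr.
by rewrite expr2 -mulrA divff // mulr1 subrr.
Qed.

Section FractionRepr.
Variable D : idomainType.
Local Notation "x %:F" := (@tofrac D x).

(* The library does not export a numerator/denominator decomposition of
   fractions, so this unfolds the construction of [{fraction D}]. *)
Lemma fraction_numden (z : {fraction D}) :
  z = (\n_(repr z))%:F / (\d_(repr z))%:F.
Proof.
rewrite -{1}[z]reprK; set x := repr z.
rewrite /GRing.inv /= /GRing.mul /=; unlock tofrac; rewrite !piE.
apply/eqmodP; rewrite /= FracField.equivfE /FracField.mulf /FracField.invf.
by rewrite !numden_Ratio ?mulf_neq0 ?oner_neq0 ?denom_ratioP // mul1r mulr1 mulrC.
Qed.

Lemma fraction_elim (Q : {fraction D} -> Prop) :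
  (forall n d, d != 0 -> Q (n%:F / d%:F)) -> forall z, Q z.
Proof. by move=> QE z; rewrite [z]fraction_numden; apply/QE/denom_ratioP. Qed.
End FractionRepr.

Section FractionLift.
Variables (D : idomainType) (F : fieldType) (g : {rmorphism D -> F}).
Variable g_inj : injective g.
Local Notation "x %:F" := (@tofrac D x).

Let tofrac_neq0 (d : D) : (d%:F != 0) = (d != 0).
Proof. by rewrite tofrac_eq0. Qed.

Let g_neq0 (d : D) : (g d != 0) = (d != 0).
Proof. by rewrite -(rmorph0 g) (inj_eq g_inj). Qed.

Definition fraction_lift of injective g := fun z : {fraction D} =>
  g (\n_(repr z)) / g (\d_(repr z)).

Lemma fraction_liftE (n d : D) :
  d != 0 -> fraction_lift g_inj (n%:F / d%:F) = g n / g d.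
Proof.
move=> d0; rewrite /fraction_lift.
have /eqP := fraction_numden (n%:F / d%:F); set n' := \n_ _; set d' := \d_ _.
have d'0 : d' != 0 by exact: denom_ratioP.
rewrite eqr_div ?tofrac_neq0 // -!tofracM tofrac_eq => /eqP e.
by apply/eqP; rewrite eqr_div ?g_neq0 // -!rmorphM e.
Qed.

Lemma fraction_lift_tofrac (a : D) : fraction_lift g_inj a%:F = g a.
Proof.
by rewrite -[a%:F]divr1 -tofrac1 fraction_liftE ?oner_neq0 // rmorph1 divr1.
Qed.

Lemma fraction_lift_is_zmod_morphism : zmod_morphism (fraction_lift g_inj).
Proof.
elim/fraction_elim=> a b b0; elim/fraction_elim=> c d d0.
have -> : a%:F / b%:F - c%:F / d%:F = (a * d - c * b)%:F / (b * d)%:F.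
  by rewrite tofracB !tofracM -mulNr addf_div ?tofrac_neq0 // mulNr.
rewrite !fraction_liftE ?mulf_neq0 // rmorphB !rmorphM.
by rewrite -[in RHS]mulNr addf_div ?g_neq0 // mulNr.
Qed.
HB.instance Definition _ := GRing.isZmodMorphism.Build _ _ (fraction_lift g_inj)
  fraction_lift_is_zmod_morphism.

Lemma fraction_lift_is_monoid_morphism : monoid_morphism (fraction_lift g_inj).
Proof.
split; first by rewrite -tofrac1 fraction_lift_tofrac rmorph1.
elim/fraction_elim=> a b b0; elim/fraction_elim=> c d d0.
by rewrite mulf_div -!tofracM !fraction_liftE ?mulf_neq0 // !rmorphM mulf_div.
Qed.
HB.instance Definition _ := GRing.isMonoidMorphism.Build _ _ (fraction_lift g_inj)
  fraction_lift_is_monoid_morphism.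
End FractionLift.

Section IdealQuotLift.
Variables (T : comNzRingType) (I : idealr T) (B : comPzRingType).
Variables (f : {rmorphism T -> B}) (f_ker : forall t, f t = 0 <-> t \in I).

Definition ideal_quot_lift of (forall t, f t = 0 <-> t \in I) :=
  fun z : {ideal_quot I} => f (repr z).
Local Notation lift := (ideal_quot_lift f_ker).

Lemma ideal_quot_lift_pi t : lift (\pi t) = f t.
Proof.
rewrite /ideal_quot_lift; apply/eqP; rewrite -subr_eq0 -rmorphB; apply/eqP/f_ker.
by rewrite Quotient.idealrBE reprK.
Qed.

Lemma ideal_quot_lift_is_zmod_morphism : zmod_morphism lift.
Proof.
by elim/quotW=> u; elim/quotW=> v; rewrite -rmorphB !ideal_quot_lift_pi rmorphB.
Qed.
HB.instance Definition _ := GRing.isZmodMorphism.Build _ _ lift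
  ideal_quot_lift_is_zmod_morphism.

Lemma ideal_quot_lift_is_monoid_morphism : monoid_morphism lift.
Proof.
split; first by rewrite -(rmorph1 \pi) ideal_quot_lift_pi rmorph1.
by elim/quotW=> u; elim/quotW=> v; rewrite -rmorphM !ideal_quot_lift_pi rmorphM.
Qed.
HB.instance Definition _ := GRing.isMonoidMorphism.Build _ _ lift
  ideal_quot_lift_is_monoid_morphism.

Lemma ideal_quot_lift_inj : injective lift.
Proof.
move=> z w; elim/quotW: z => u; elim/quotW: w => v.
rewrite !ideal_quot_lift_pi => /eqP.
by rewrite -subr_eq0 -rmorphB => /eqP /f_ker; rewrite Quotient.idealrBE => /eqP.
Qed.
End IdealQuotLift.

(* [{ideal_quot _}] carries no unit-ring structure, which [{fraction _}]
   requires; a classical one is available on any commutative ring. *)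
Section ClassicalUnitRing.
Variable T : comNzRingType.

Definition classical_unit : {pred T} := fun a => `[< exists b, b * a = 1 >].

Definition classical_inv (a : T) : T :=
  if pselect (exists b, b * a = 1) is left h then projT1 (cid h) else a.

Lemma classical_mulVr : {in classical_unit, left_inverse 1 classical_inv *%R}.
Proof.
by move=> a /asboolP h; rewrite /classical_inv; case: pselect => // h'; case: cid.
Qed.

Lemma classical_unitPl a b : b * a = 1 -> classical_unit a.
Proof. by move=> h; apply/asboolP; exists b. Qed.

Lemma classical_invr_out : {in [predC classical_unit], classical_inv =1 id}.
Proof.
move=> a /negP a_nunit; rewrite /classical_inv; case: pselect => // h.
by case: a_nunit; apply/asboolP.
Qed.
End ClassicalUnitRing.

Section ResidueField.
Variables (R : comPzRingType) (p : Spec R).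
Local Notation P := (sval p).

Lemma prime_oner_neq0 : (1 : R) != 0.
Proof. by case: (proj2_sig p) => -[P0 _ _] P1 _; apply: contra_notN P1 => /eqP ->. Qed.

(* R is nonzero since it has the prime p; the quotient library wants this as a
   [comNzRingType] structure. *)
Definition nonzero_ring : Type := R.
HB.instance Definition _ := GRing.ComPzRing.on nonzero_ring.
HB.instance Definition _ :=
  GRing.PzSemiRing_isNonZero.Build nonzero_ring prime_oner_neq0.

Definition prime_pred : {pred nonzero_ring} := fun r => `[< P r >].

Lemma prime_pred_idealr : idealr_closed prime_pred.
Proof.
case: (proj2_sig p) => -[P0 PD PM] P1 _; split.
- exact/asboolP.
- exact/asboolP.
- by move=> a u v /asboolP Pu /asboolP Pv; apply/asboolP/PD => //; apply: PM.
Qed.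
HB.instance Definition _ := isIdealr.Build nonzero_ring prime_pred prime_pred_idealr.

Lemma prime_pred_prime : prime_idealr_closed prime_pred.
Proof.
case: (proj2_sig p) => _ _ Pp u v /asboolP /Pp.
by case=> h; apply/orP; [left|right]; apply/asboolP.
Qed.
HB.instance Definition _ :=
  isPrimeIdealrClosed.Build nonzero_ring prime_pred prime_pred_prime.

Definition residue_domain := {ideal_quot prime_pred}.
HB.instance Definition _ := Choice.on residue_domain.
HB.instance Definition _ := GRing.ComNzRing.on residue_domain.
HB.instance Definition _ := GRing.ComNzRing_hasMulInverse.Build residue_domain
  (@classical_mulVr _) (@classical_unitPl _) (@classical_invr_out _).
HB.instance Definition _ := GRing.ComUnitRing_isIntegral.Build residue_domain
  (@Quotient.rquot_IdomainAxiom _ _).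

Definition residue_field : fieldType := {fraction residue_domain}.

Local Notation pi := (\pi_residue_domain : {rmorphism nonzero_ring -> _}).

Definition residue_map : {rmorphism R -> residue_field} :=
  (@tofrac residue_domain \o pi)%FUN.

Lemma residue_map_eq0 r : residue_map r = 0 <-> P r.
Proof.
have pi_eq0 : (pi r == 0) = (r \in prime_pred).
  by rewrite -(rmorph0 pi) -Quotient.idealrBE subr0.
rewrite /residue_map /=; split => [/eqP|Pr].
  by rewrite tofrac_eq0 pi_eq0 => /asboolP.
by apply/eqP; rewrite tofrac_eq0 pi_eq0; apply/asboolP.
Qed.

Lemma residue_field_lift (F : fieldType) (f : {rmorphism R -> F}) :
  (forall r, f r = 0 <-> P r) ->
  exists j : {rmorphism residue_field -> F}, forall r, j (residue_map r) = f r.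
Proof.
move=> f_ker.
have f_kerP (r : nonzero_ring) : f r = 0 <-> r \in prime_pred.
  by rewrite f_ker; split => /asboolP.
pose g : {rmorphism residue_domain -> F} := ideal_quot_lift f_kerP.
have g_inj : injective g by exact: ideal_quot_lift_inj.
exists (fraction_lift g_inj) => r.
by rewrite /= fraction_lift_tofrac; apply: ideal_quot_lift_pi.
Qed.
End ResidueField.

Lemma spec_ext (T : comPzRingType) (p q : Spec T) :
  (forall a, sval p a <-> sval q a) -> p = q.
Proof.
move=> pq; apply: eq_sig_hprop => [? ? ?|]; first exact: Prop_irrelevance.
by apply: funext => a; apply: propext.
Qed.

Lemma kernel_prime (T : comPzRingType) (D : idomainType) (g : {rmorphism T -> D}) :
  is_prime_ideal (fun a => g a = 0).
Proof.
split; first split.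
- exact: rmorph0.
- by move=> a b ga gb; rewrite rmorphD ga gb addr0.
- by move=> a b gb; rewrite rmorphM gb mulr0.
- by rewrite rmorph1; apply/eqP; exact: oner_neq0.
- by move=> a b; rewrite rmorphM => /eqP; rewrite mulf_eq0 => /orP[]/eqP; [left|right].
Qed.

Definition kernel_spec (T : comPzRingType) (D : idomainType)
  (g : {rmorphism T -> D}) : Spec T := exist _ _ (kernel_prime g).

Section PrimeAvoidingPowers.
Variables (R : comPzRingType) (r : R).
Hypothesis r_not_nilpotent : forall n, r ^+ n != 0.

Definition ideal_avoiding_powers (I : set R) : Prop :=
  [/\ forall n, ~ I (r ^+ n), forall a b, I a -> I b -> I (a + b)
    & forall c a, I a -> I (c * a)].

Lemma ex_maximal_ideal_avoiding_powers : exists M, ideal_avoiding_powers M /\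
  forall B, (M `<` B)%classic -> ~ ideal_avoiding_powers B.
Proof.
apply: Zorn_bigcup => F FP Ftot; split.
- by move=> n [X /FP[Xr _ _]]; apply: Xr.
- move=> a b [X FX Xa] [Y FY Yb].
  have [XY|YX] := Ftot X Y FX FY.
    by exists Y => //; case: (FP Y FY) => _ YD _; apply: YD => //; apply: XY.
  by exists X => //; case: (FP X FX) => _ XD _; apply: XD => //; apply: YX.
- by move=> c a [X FX Xa]; exists X => //; case: (FP X FX) => _ _ XM; apply: XM.
Qed.

Section MaximalIdealAvoidingPowers.
Variable M : set R.
Hypotheses (M_avoid : ideal_avoiding_powers M)
  (M_max : forall B, (M `<` B)%classic -> ~ ideal_avoiding_powers B).

Lemma maximal_avoiding_powers0 : M 0.
Proof.
have [Mr MD MM] := M_avoid.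
apply: contrapT => M0; apply: (@M_max (M `|` [set 0])%classic).
  by split=> [|/(_ 0) UM]; [exact: subsetUl | apply/M0/UM; right].
split.
- by move=> n [/Mr //|/eqP r0]; move: (r_not_nilpotent n); rewrite r0.
- by move=> a b [Ma|->] [Mb|->]; rewrite ?addr0 ?add0r; [left; apply: MD|left|left|right].
- by move=> c a [Ma|->]; [left; apply: MM | right; rewrite mulr0].
Qed.

Lemma maximal_avoiding_powers_extend a :
  ~ M a -> exists n m c, M m /\ r ^+ n = m + c * a.
Proof.
have [Mr MD MM] := M_avoid.
pose J : set R := fun z => exists m c, M m /\ z = m + c * a.
move=> Ma; apply: contrapT => Jr; apply: (M_max (B := J)).
  split; first by move=> m Mm; exists m, 0; rewrite mul0r addr0.
  move=> JM; apply: Ma; apply: JM; exists 0, 1.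
  by rewrite add0r mul1r; split=> //; apply: maximal_avoiding_powers0.
split.
- by move=> n Jn; apply: Jr; exists n.
- move=> _ _ [m1 [c1 [M1 ->]]] [m2 [c2 [M2 ->]]].
  by exists (m1 + m2), (c1 + c2); split; [apply: MD | ring].
- move=> c _ [m [d [Mm ->]]].
  by exists (c * m), (c * d); split; [apply: MM | ring].
Qed.

Lemma maximal_avoiding_powers_prime : is_prime_ideal M.
Proof.
have [Mr MD MM] := M_avoid.
split; first by split=> //; apply: maximal_avoiding_powers0.
- by move=> M1; apply: (Mr 0); rewrite expr0.
move=> a b Mab; apply: contrapT => /not_orP [Ma Mb].
have [n [m1 [c1 [M1 e1]]]] := maximal_avoiding_powers_extend Ma.
have [k [m2 [c2 [M2 e2]]]] := maximal_avoiding_powers_extend Mb.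
apply: (Mr (n + k)%N).
have -> : r ^+ (n + k) = (m2 + c2 * b) * m1 + c1 * (a * m2) + (c1 * c2) * (a * b).
  by rewrite exprD e1 e2; ring.
by apply: (MD); [apply: (MD); apply: (MM) => //; apply: (MM) | apply: (MM)].
Qed.
End MaximalIdealAvoidingPowers.

Lemma ex_prime_avoiding : exists p : Spec R, ~ sval p r.
Proof.
have [M [M_avoid M_max]] := ex_maximal_ideal_avoiding_powers.
exists (exist _ M (maximal_avoiding_powers_prime M_avoid M_max)) => /= Mr.
by case: M_avoid => M_pow _ _; apply: (M_pow 1); rewrite expr1.
Qed.
End PrimeAvoidingPowers.

Definition principal_ideal (T : comPzRingType) (g : T) : T -> Prop :=
  fun a => exists c, a = c * g.

Section PrincipalIdeal.
Variables (T : comPzRingType) (g : T).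

Lemma principal_ideal_is_ideal : is_ideal (principal_ideal g).
Proof.
split.
- by exists 0; rewrite mul0r.
- by move=> _ _ [c ->] [d ->]; exists (c + d); rewrite mulrDl.
- by move=> a _ [c ->]; exists (a * c); rewrite mulrA.
Qed.

Lemma principal_ideal_fg : finitely_generated (principal_ideal g).
Proof.
exists [:: g] => a; rewrite /fg_ideal /=; split.
  by move=> [c ->]; exists [:: c]; rewrite big_ord1.
by move=> [c [_ ->]]; exists c`_0; rewrite big_ord1.
Qed.

Lemma V_principal_ideal (q : Spec T) : V (principal_ideal g) q <-> Vf g q.
Proof.
split; first by apply; exists 1; rewrite mul1r.
have [[_ _ qM] _ _] := proj2_sig q.
by move=> qg a [c ->]; apply: qM.
Qed.

Lemma zariski_closed_Vf : zariski_closed (Vf g).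
Proof.
exists (principal_ideal g); split; first exact: principal_ideal_is_ideal.
by move=> q; rewrite V_principal_ideal.
Qed.

Lemma flat_open_Vf : flat_open (Vf g).
Proof.
move=> q gq; exists (principal_ideal g).
split; [exact: principal_ideal_is_ideal | exact: principal_ideal_fg | |].
- exact/V_principal_ideal.
- by move=> q' /V_principal_ideal.
Qed.
End PrincipalIdeal.

Lemma compl_Vf_pointwise_inv (T : comPzRingType) (a b : T) :
  pointwise_inv a b -> (fun q => ~ Vf a q) = Vf (1 - a * b).
Proof.
move=> /pointwise_inv_idempotent [e_idem ae_a].
apply: funext => q; case: (proj2_sig q) => -[q0 qD qM] q1 qp.
apply: propext; rewrite /Vf; split.
  move=> qa; have : sval q ((a * b) * (1 - a * b)) by rewrite e_idem.
  by case/qp => // qe; case: qa; rewrite -ae_a; apply: qM.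
move=> qe qa; apply: q1; rewrite -(subrK (a * b) 1); apply: qD => //.
by rewrite mulrC; apply: qM.
Qed.

Lemma Vf_pointwise_inv_clopen (T : comPzRingType) (a b : T) : pointwise_inv a b ->
  [/\ zariski_open (Vf a), zariski_closed (Vf a), flat_open (Vf a) & flat_closed (Vf a)].
Proof.
move=> ab; rewrite /zariski_open /flat_closed (compl_Vf_pointwise_inv ab).
by split; apply: zariski_closed_Vf || apply: flat_open_Vf.
Qed.

Section PointwiseLocalization.
Variables (R : comPzRingType) (S : R -> Prop) (A : comPzRingType).
Variables (eta : {rmorphism R -> A}) (x : R -> A).
Hypothesis loc : is_pinv_localization S eta x.

Lemma localization_pointwise_inv s : S s -> pointwise_inv (eta s) (x s).
Proof. exact: loc.1. Qed.

Lemma localization_epi (B : comPzRingType) (g h : {rmorphism A -> B}) :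
  (forall r, g (eta r) = h (eta r)) -> g =1 h.
Proof.
move=> gh a.
have gx s : S s -> pointwise_inv (g (eta s)) (g (x s)).
  by move/localization_pointwise_inv; apply: rmorph_pointwise_inv.
have hx s : S s -> h (x s) = g (x s).
  move=> Ss; apply: (@pointwise_inv_uniq _ (h (eta s))).
    exact/rmorph_pointwise_inv/localization_pointwise_inv.
  by rewrite -gh; apply: gx.
have [k [_ k_uniq]] := loc.2 B (g \o eta) (g \o x) gx.
by rewrite (k_uniq g) // (k_uniq h (fun r => esym (gh r)) hx).
Qed.

Lemma localization_lift (F : fieldType) (f : {rmorphism R -> F}) :
  exists g : {rmorphism A -> F}, forall r, g (eta r) = f r.
Proof.
have [g [[gE _] _]] := loc.2 F f (fun s => (f s)^-1) (fun s _ => pointwise_invV _).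
by exists g.
Qed.

Lemma localization_comap_surj (p : Spec R) : exists q, comap eta q = p.
Proof.
have [psi psiE] := localization_lift (residue_map p).
by exists (kernel_spec psi); apply: spec_ext => r /=; rewrite psiE residue_map_eq0.
Qed.

Lemma localization_fiber (p : Spec R) (psi : {rmorphism A -> residue_field p}) :
  (forall r, psi (eta r) = residue_map p r) ->
  forall q, comap eta q = p -> q = kernel_spec psi.
Proof.
move=> psiE q qp.
have ker_q r : residue_map q (eta r) = 0 <-> sval p r by rewrite residue_map_eq0 -qp.
have [j jE] := residue_field_lift (f := residue_map q \o eta) ker_q.
have j_psi : j \o psi =1 residue_map q.
  by apply: (localization_epi (g := j \o psi : {rmorphism A -> _})) => r /=; rewrite psiE jE.
apply: spec_ext => a /=; rewrite -residue_map_eq0 -j_psi /=.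
by split=> [/eqP|->]; [rewrite fmorph_eq0 => /eqP | rewrite rmorph0].
Qed.

Lemma localization_comap_inj : injective (comap eta).
Proof.
move=> q1 q2 e; have [psi psiE] := localization_lift (residue_map (comap eta q1)).
by rewrite (localization_fiber psiE (erefl _)) (localization_fiber psiE (esym e)).
Qed.

Lemma localization_comap_bij : bijective (comap eta).
Proof.
have [g gK] := choice localization_comap_surj.
by exists g => // q; apply: localization_comap_inj; rewrite gK.
Qed.

Lemma localization_neq01 : (0 : A) != 1 <-> (0 : R) != 1.
Proof.
split; first by apply: contraNneq => e; rewrite -(rmorph0 eta) -(rmorph1 eta) e.
move=> R01; have [p _] : exists p : Spec R, ~ sval p 1.
  by apply: ex_prime_avoiding => n; rewrite expr1n eq_sym.
have [q _] := localization_comap_surj p; have [[q0 _ _] q1 _] := proj2_sig q.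
by apply: contra_notN q1 => /eqP <-.
Qed.

Lemma localization_ker_nilpotent r : eta r = 0 -> exists n, r ^+ n = 0.
Proof.
move=> r0; apply: contrapT => r_nnil.
have [p pr] : exists p : Spec R, ~ sval p r.
  by apply: ex_prime_avoiding => n; apply/eqP => rn; apply: r_nnil; exists n.
have [q qp] := localization_comap_surj p.
by apply: pr; rewrite -qp /= r0; case: (proj2_sig q) => -[].
Qed.
End PointwiseLocalization.

Theorem proposition3p5 (R : comPzRingType) (S : R -> Prop)
  (A : comPzRingType) (eta : {rmorphism R -> A}) (x : R -> A) :
  is_pinv_localization S eta x ->
  (* (i) eta is an epimorphism of commutative rings *)
  (forall (B : comPzRingType) (g h : {rmorphism A -> B}),
         (forall r, g (eta r) = h (eta r)) -> forall a, g a = h a) /\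
  (* (ii) eta-star is bijective *)
      bijective (comap eta) /\
  (* (iii) the preimage under eta-star of V(s) is clopen for Zariski and flat topologies *)
      (forall s, S s ->
         let Z := fun q : Spec A => Vf s (comap eta q) in
         [/\ zariski_open Z, zariski_closed Z, flat_open Z & flat_closed Z]) /\
  (* (iv) A is nonzero iff R is *)
      ((0 : A) != 1 <-> (0 : R) != 1) /\
  (* (v) ker eta is contained in the nilradical *)
    (forall r, eta r = 0 -> exists n : nat, r ^+ n = 0).
Proof.
move=> loc; split; first exact: localization_epi loc.
split; first exact: localization_comap_bij loc.
split.
  by move=> s /(localization_pointwise_inv loc) /Vf_pointwise_inv_clopen.
split; [exact: localization_neq01 loc | exact: localization_ker_nilpotent loc].
Qed.
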